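(* In the setting of Top Half Sampling, run with an optimal Natural LP solution $(x_{ij})$ of value $\textsc{Opt}$ on an edge-weighted instance with free disposal, define $\bar A(t)=\textsc{Opt}-A(t)$, where $A(t)$ is the algorithm's objective right before time $t$. Then \[ \frac{d}{dt}\mathbf{E}\,\bar A(t)\Big|_{t=0}\le -\textsc{Opt}. \]
   Context: Poisson arrival model: $I$ is a finite set of online types and $J$ a finite set of offline vertices, with edges $E$, $J_i$ the neighbors of type $i$, and weights $w_{ij}>0$. Type $i$ arrives by an independent Poisson process of rate $\lambda_i>0$ on $[0,1]$. Under free disposal only the heaviest edge matched to each offline vertex counts. Natural LP: maximize $\sum w_{ij}x_{ij}$ subject to $x\ge0$, $\sum_{j\in J_i}x_{ij}\le\lambda_i$, and $\sum_{i\in S}x_{ij}\le 1-e^{-\sum_{i\in S}\lambda_i}$ for all $j$ and all $S$ of neighbors of $j$. Top Half Sampling: with $w_j(t)$ the max weight matched to $j$ before $t$ ($0$ if none) and $w_{ij}(t)=\max\{w_{ij}-w_j(t),0\}$, order $J_i$ by non-increasing $w_{ij}(t)$. Let $\sigma_{i,t}(\theta)$ be the neighbor whose cumulative $x_{ij}$-interval in this order contains $\theta$, and $\perp$ (unmatched) if $\theta\ge\sum_jx_{ij}$. A type-$i$ arrival at time $t$ samples $\theta\sim U[0,\lambda_i/2)$ and is matched to $\sigma_{i,t}(\theta)$. *)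

From Stdlib Require Import Reals.
From Coquelicot Require Import Coquelicot.
From HB Require Import structures.
From mathcomp Require Import all_boot all_order all_algebra.
From mathcomp Require Import Rstruct.

Set Implicit Arguments.
Unset Strict Implicit.
Unset Printing Implicit Defensive.

Import Order.TTheory GRing.Theory Num.Theory.
Local Open Scope ring_scope.

Section Model.
Variables (I J : finType).

Definition lp_feasible (E : I -> J -> bool) (lam : I -> R) (x : I -> J -> R) : Prop :=
  [/\ (forall i j, 0 <= x i j),
      (forall i j, ~~ E i j -> x i j = 0),
      (forall i, \sum_(j | E i j) x i j <= lam i) &
      (forall j (S : {set I}), S \subset [set i | E i j] ->
         \sum_(i in S) x i j <= 1 - exp (- \sum_(i in S) lam i))].

Definition lp_value (E : I -> J -> bool) (w : I -> J -> R) (x : I -> J -> R) : R :=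
  \sum_i \sum_(j | E i j) w i j * x i j.

Definition lp_optimal (E : I -> J -> bool) (w : I -> J -> R) (lam : I -> R)
    (x : I -> J -> R) : Prop :=
  lp_feasible E lam x /\
  forall y, lp_feasible E lam y -> lp_value E w y <= lp_value E w x.

(* sigma_{i,t}(theta): walk the ordered neighbour list, cumulative
   x_ij-intervals [c_{m-1}, c_m); None = unmatched (bottom). *)
Fixpoint sigma_seq (xi : J -> R) (s : seq J) (theta : R) : option J :=
  match s with
  | [::] => None
  | j :: s' => if theta < xi j then Some j else sigma_seq xi s' (theta - xi j)
  end.

(* A state s : J -> R records w_j(t), the max weight matched to j so far. *)
Definition resid (w : I -> J -> R) (s : J -> R) (i : I) (j : J) : R :=
  Rmax (w i j - s j) 0.

Definition valid_order (E : I -> J -> bool) (w : I -> J -> R)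
    (ord : (J -> R) -> I -> seq J) : Prop :=
  forall s i, perm_eq (ord s i) [seq j <- enum J | E i j] /\
              sorted (fun a b => resid w s i b <= resid w s i a) (ord s i).

(* One arrival of type i with sample theta, under free disposal. *)
Definition ths_step (w : I -> J -> R) (x : I -> J -> R)
    (ord : (J -> R) -> I -> seq J) (s : J -> R) (i : I) (theta : R) : J -> R :=
  match sigma_seq (x i) (ord s i) theta with
  | None => s
  | Some j => fun k => if k == j then Rmax (s j) (w i j) else s k
  end.

Definition total_rate (lam : I -> R) : R := \sum_i lam i.

(* ths_value n s = expected objective (sum_j w_j) after n further arrivals
   of the superposed Poisson process started from state s: each arrival is
   of type i w.p. lam_i / Lambda, and samples theta ~ U[0, lam_i/2)
   (density 2/lam_i). *)
Fixpoint ths_value (w : I -> J -> R) (x : I -> J -> R) (lam : I -> R)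
    (ord : (J -> R) -> I -> seq J) (n : nat) (s : J -> R) : R :=
  match n with
  | 0 => \sum_j s j
  | n'.+1 => \sum_i (lam i / total_rate lam) *
               ((2 / lam i) *
                RInt (fun theta => ths_value w x lam ord n' (ths_step w x ord s i theta))
                     0 (lam i / 2))
  end.

(* E A(t): the number of arrivals in [0,t) is Poisson(Lambda t); the
   algorithm's behaviour depends only on the sequence of arrivals. *)
Definition expected_obj (w : I -> J -> R) (x : I -> J -> R) (lam : I -> R)
    (ord : (J -> R) -> I -> seq J) (t : R) : R :=
  Series (fun n : nat =>
    exp (- (total_rate lam * t)) * (total_rate lam * t) ^+ n / (n`!)%:R
      * ths_value w x lam ord n (fun _ => 0)).

End Model.

From Stdlib Require Import Reals Lra Factorial.
From Coquelicot Require Import Coquelicot.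
From HB Require Import structures.
From mathcomp Require Import all_boot all_order all_algebra.
From mathcomp Require Import Rstruct.
Import Order.TTheory GRing.Theory Num.Theory.

(* The number of arrivals in [0, t) is Poisson(L t) with L the total rate, so
   the expected objective is a Poisson mixture of the values V_n of n arrivals
   from the empty state.  As V_0 = 0 and V_n is bounded, the mixture is
   e^{-Lt} L t V_1 + O(t^2), whose right derivative at 0 is L V_1.  A single
   arrival of type i meets the empty state, so its order lists J_i by
   non-increasing w_ij and the weight collected at the sample theta is antitone
   in theta.  Hence the integral over the top half [0, lam_i/2) of the
   x_i-intervals is at least half the integral over all of them, i.e. at least
   sum_j w_ij x_ij / 2, and summing over i gives L V_1 >= Opt. *)

Local Open Scope R_scope.

Definition poisson_pmf (u : R) (n : nat) : R := exp (- u) * u ^ n / INR (fact n).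

Lemma is_series_poisson_pmf u : is_series (poisson_pmf u) 1.
Proof.
have H := is_series_scal_l (exp (- u)) _ _ (proj1 (is_pseries_R _ _ _) (is_exp_Reals u)).
rewrite /scal /= /mult /= -exp_plus Rplus_opp_l exp_0 in H.
apply: is_series_ext H => n; rewrite /poisson_pmf /scal /= /mult /=; field.
exact: INR_fact_neq_0.
Qed.

Lemma poisson_pmf_ge0 u n : 0 <= u -> 0 <= poisson_pmf u n.
Proof.
move=> Hu; rewrite /poisson_pmf.
apply: Rmult_le_pos; last by left; apply: Rinv_0_lt_compat; apply: INR_fact_lt_0.
apply: Rmult_le_pos; [left; exact: exp_pos | exact: pow_le].
Qed.

Lemma poisson_mixture_first_order (u B : R) (V : nat -> R) :
  0 <= u -> V 0%nat = 0 -> (forall n, 0 <= V n <= B) ->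
  exists rest, Series (fun n => poisson_pmf u n * V n)
                 = exp (- u) * u * V 1%nat + rest /\ 0 <= rest <= B * u ^ 2.
Proof.
move=> Hu HV0 HV.
set p := poisson_pmf u; set a := fun n => p n * V n.
have Hp := is_series_poisson_pmf u.
have Hp0 n : 0 <= p n by apply: poisson_pmf_ge0.
have HB : 0 <= B by have := HV 0%nat; lra.
have Ha n : 0 <= a n <= B * p n.
{ have := HV n; rewrite /a => -[H1 H2]; split; first exact: Rmult_le_pos.
  by rewrite (Rmult_comm B); apply: Rmult_le_compat_l. }
have Hpa : ex_series a.
{ apply: (ex_series_le _ (fun n => B * p n)); last by exists (scal B 1); exact: is_series_scal_l.
  by move=> n; have [H0 H1] := Ha n; rewrite /norm /= /abs /= Rabs_pos_eq. }
have Hpa1 := proj1 (ex_series_incr_1 a) Hpa.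
have Htail : is_series (fun k => p (S (S k))) (1 - p 0%nat - p 1%nat).
{ apply: (is_series_incr_1 (fun k => p (S k))); apply: is_series_incr_1.
  by rewrite /plus /= (_ : _ + _ + _ = 1) //; ring. }
exists (Series (fun k => a (S (S k)))); split.
{ rewrite (Series_incr_1 _ Hpa) (Series_incr_1 _ Hpa1) /a /p /poisson_pmf /= HV0.
  field. }
have Hpa2 := proj1 (ex_series_incr_1 _) Hpa1.
have Hrest_ge0 : 0 <= Series (fun k => a (S (S k))).
{ rewrite -(Rmult_0_l (Series (fun _ => 1))) -Series_scal_l.
  apply: Series_le => // n; rewrite Rmult_0_l; have := Ha (S (S n)); lra. }
have Hrest_le : Series (fun k => a (S (S k))) <= B * (1 - p 0%nat - p 1%nat).
{ rewrite -(is_series_unique _ _ Htail) -Series_scal_l.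
  apply: Series_le => [n | ]; first exact: Ha.
  by exists (scal B (1 - p 0%nat - p 1%nat)); exact: is_series_scal_l. }
split=> //; apply: Rle_trans Hrest_le _.
apply: Rmult_le_compat_l => //.
(* e^{-u} >= 1 - u gives 1 - e^{-u}(1 + u) <= 1 - (1 - u)(1 + u) = u^2. *)
have := exp_ineq1_le (- u); have := exp_pos (- u).
rewrite /p /poisson_pmf /=; nra.
Qed.

Lemma filterlim_at_right_linear_error (g : R -> R) (D K : R) :
  (forall h, 0 < h -> Rabs (g h - D) <= K * h) ->
  filterlim g (at_right 0) (locally D).
Proof.
move=> Hg; apply/filterlim_locally => eps.
have HK : 0 < Rabs K + 1 by have := Rabs_pos K; lra.
have Hd : 0 < eps / (Rabs K + 1) by apply: Rdiv_lt_0_compat => //; exact: cond_pos.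
exists (mkposreal _ Hd) => h Hh hpos.
change (Rabs (h - 0) < eps / (Rabs K + 1)) in Hh; change (Rabs (g h - D) < eps).
rewrite Rminus_0_r Rabs_pos_eq in Hh; last by lra.
have Hh' : h * (Rabs K + 1) < eps.
{ move: Hh => /(Rmult_lt_compat_r _ _ _ HK).
  by rewrite /Rdiv Rmult_assoc Rinv_l; lra. }
apply: Rle_lt_trans (Hg h hpos) _.
have := Rle_abs K; have := Rabs_pos K; nra.
Qed.

Lemma poisson_mixture_right_derivative (L B : R) (V : nat -> R) :
  0 <= L -> V 0%nat = 0 -> (forall n, 0 <= V n <= B) ->
  let F t := Series (fun n => poisson_pmf (L * t) n * V n) in
  filterlim (fun h => (F h - F 0) / h) (at_right 0) (locally (L * V 1%nat)).
Proof.
move=> HL HV0 HV F.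
have [HV1 HVB] := HV 1%nat.
have HF0 : F 0 = 0.
{ rewrite /F Rmult_0_r.
  have [rest [-> Hrest]] := poisson_mixture_first_order 0 B V (Rle_refl 0) HV0 HV.
  move: Hrest; rewrite /= !Rmult_0_l; lra. }
apply: (filterlim_at_right_linear_error _ _ (B * L ^ 2)) => h hpos.
have Hu : 0 <= L * h by nra.
have [rest [HFh [Hr0 Hr1]]] := poisson_mixture_first_order (L * h) B V Hu HV0 HV.
rewrite HF0 /F HFh.
have Hexp := exp_ineq1_le (- (L * h)).
have Hexp1 : exp (- (L * h)) <= 1.
{ have := exp_plus (L * h) (- (L * h)); rewrite Rplus_opp_r exp_0.
  have := exp_ineq1_le (L * h); have := exp_pos (- (L * h)); nra. }
have -> : (exp (- (L * h)) * (L * h) * V 1%nat + rest - 0) / h - L * V 1%nat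
          = rest / h - L * V 1%nat * (1 - exp (- (L * h))) by field; lra.
have Hrest : 0 <= rest / h <= B * L ^ 2 * h.
{ split; first exact: Rdiv_le_0_compat.
  apply: (Rmult_le_reg_r h) => //.
  rewrite (_ : rest / h * h = rest); last by field; lra.
  have : B * (L * h) ^ 2 = B * L ^ 2 * h * h by ring.
  lra. }
have Hloss : 0 <= L * V 1%nat * (1 - exp (- (L * h))) <= B * L ^ 2 * h.
{ have HLV : 0 <= L * V 1%nat by nra.
  split; first by nra.
  have : L * V 1%nat * (1 - exp (- (L * h))) <= L * V 1%nat * (L * h) by nra.
  have : 0 <= L * (L * h) by nra.
  nra. }
apply: Rabs_le; lra.
Qed.

Lemma RInt_translate (g : R -> R) (c p q : R) :
  ex_RInt g (p - c) (q - c) ->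
  ex_RInt (fun t => g (t - c)) p q /\ RInt (fun t => g (t - c)) p q = RInt g (p - c) (q - c).
Proof.
have E t : 1 * t + - c = t - c by rewrite Rmult_1_l.
rewrite -!E => Hg; split.
- apply: ex_RInt_ext _ (ex_RInt_comp_lin g 1 (- c) p q Hg) => t _.
  by rewrite /scal /= /mult /= E Rmult_1_l.
- rewrite -RInt_comp_lin //; apply: RInt_ext => t _.
  by rewrite /scal /= /mult /= E Rmult_1_l.
Qed.

Lemma RInt_bounds (g : R -> R) (b B : R) : 0 <= b -> ex_RInt g 0 b ->
  (forall t, 0 <= g t <= B) -> 0 <= RInt g 0 b <= b * B.
Proof.
move=> Hb Hex Hg.
have Hc v : RInt (fun _ => v) 0 b = b * v by rewrite RInt_const /scal /= /mult /= Rminus_0_r.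
split.
- have := RInt_le (fun _ => 0) g 0 b Hb (ex_RInt_const _ _ _) Hex (fun t _ => (Hg t).1).
  by rewrite Hc Rmult_0_r.
- have := RInt_le g (fun _ => B) 0 b Hb Hex (ex_RInt_const _ _ _) (fun t _ => (Hg t).2).
  by rewrite Hc.
Qed.

Local Open Scope ring_scope.

Section SampledNeighbour.
Variables (J : finType) (xi : J -> R).

Lemma ex_RInt_sigma_seq (F : option J -> R) l a b :
  ex_RInt (fun t => F (sigma_seq xi l t)) a b.
Proof.
elim: l a b => [|j l IH] a b /=; first exact: ex_RInt_const.
set g := fun t => F (if t < xi j then Some j else sigma_seq xi l (t - xi j)).
have below p q : Rle p (xi j) -> Rle q (xi j) -> ex_RInt g p q.
{ move=> Hp Hq; apply: (ex_RInt_ext (fun _ => F (Some j))); last exact: ex_RInt_const.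
  move=> t [_ Ht]; rewrite /g ifT //; apply/RltP.
  by apply: Rlt_le_trans Ht _; apply: Rmax_lub. }
have above p q : Rle (xi j) p -> Rle (xi j) q -> ex_RInt g p q.
{ move=> Hp Hq; apply: (ex_RInt_ext (fun t => F (sigma_seq xi l (t - xi j)))).
  - move=> t [Ht _]; rewrite /g ifF //; apply/negbTE/RltP.
    by apply: Rle_not_lt; apply: Rlt_le; apply: Rle_lt_trans Ht; apply: Rmin_glb.
  - exact: (RInt_translate (fun t => F (sigma_seq xi l t)) _ _ _ (IH _ _)).1. }
have to_xi p : ex_RInt g p (xi j).
{ by case: (Rle_or_lt p (xi j)) => Hp; [apply: below | apply: above]; lra. }
exact: ex_RInt_Chasles (to_xi a) (ex_RInt_swap _ _ _ (to_xi b)).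
Qed.

Lemma RInt_sigma_seq (F : option J -> R) : F None = 0 -> (forall j, 0 <= xi j) ->
  forall l T, \sum_(j <- l) xi j <= T ->
  RInt (fun t => F (sigma_seq xi l t)) 0 T = \sum_(j <- l) F (Some j) * xi j.
Proof.
move=> HF0 Hxi; elim=> [|j l IH] T HT /=.
  by rewrite big_nil RInt_const HF0 /scal /= /mult /= Rmult_0_r.
rewrite big_cons; rewrite big_cons in HT.
have Hl : 0 <= \sum_(k <- l) xi k by apply: sumr_ge0.
have /RleP HjT : xi j <= T by apply: (le_trans _ HT); rewrite lerDl.
have HlT : \sum_(k <- l) xi k <= T - xi j by rewrite lerBrDl.
set g := fun t => F (if t < xi j then Some j else sigma_seq xi l (t - xi j)).
have /RleP Hj := Hxi j.
have Hhead : RInt g 0 (xi j) = F (Some j) * xi j.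
{ rewrite (RInt_ext g (fun _ => F (Some j))) ?RInt_const.
    by rewrite /scal /= /mult /= Rminus_0_r Rmult_comm.
  rewrite Rmin_left ?Rmax_right // => t [_ Ht].
  by rewrite /g ifT //; apply/RltP. }
have Htail : RInt g (xi j) T = \sum_(k <- l) F (Some k) * xi k.
{ rewrite (RInt_ext g (fun t => F (sigma_seq xi l (t - xi j)))); last first.
    rewrite Rmin_left ?Rmax_right // => t [Ht _].
    by rewrite /g ifF //; apply/negbTE/RltP; lra.
  etransitivity; first exact: (RInt_translate _ _ _ _ (ex_RInt_sigma_seq _ _ _ _)).2.
  by rewrite Rminus_diag; apply: IH. }
rewrite -(RInt_Chasles g 0 (xi j) T) ?Hhead ?Htail //; exact: (ex_RInt_sigma_seq F (j :: l)).
Qed.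

Lemma sigma_seq_mem l t j : sigma_seq xi l t = Some j -> j \in l.
Proof.
elim: l t => [|k l IH] t //=; case: ifP => _ => [[<-]|/IH]; rewrite inE ?eqxx // => ->.
by rewrite orbT.
Qed.

Lemma sigma_seq_antitone (F : option J -> R) l :
  (forall j, F None <= F (Some j)) -> sorted (fun a b => F (Some b) <= F (Some a)) l ->
  forall t1 t2, t1 <= t2 -> F (sigma_seq xi l t2) <= F (sigma_seq xi l t1).
Proof.
move=> HNone; elim: l => [|j l IH] Hs t1 t2 Ht //=.
have Hall := order_path_min (fun a b c hab hbc => le_trans hbc hab) Hs.
case: (ltP t2 (xi j)) => [H2|H2]; first by rewrite (le_lt_trans Ht H2).
case: (ltP t1 (xi j)) => [H1|H1]; last by apply: (IH (path_sorted Hs)); rewrite lerD2r.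
case E: (sigma_seq xi l (t2 - xi j)) => [k|//].
exact: (allP Hall) k (sigma_seq_mem _ _ _ E).
Qed.

Lemma RInt_sigma_seq_top_half (F : option J -> R) l L :
  F None = 0 -> (forall j, 0 <= F (Some j)) -> (forall j, 0 <= xi j) ->
  sorted (fun a b => F (Some b) <= F (Some a)) l -> \sum_(j <- l) xi j <= L ->
  \sum_(j <- l) F (Some j) * xi j <= 2 * RInt (fun t => F (sigma_seq xi l t)) 0 (L / 2).
Proof.
move=> HF0 HF Hxi Hs HL.
set G := fun t => F (sigma_seq xi l t).
have HL0 : 0 <= L by apply: le_trans HL; apply: sumr_ge0.
have Hhalf : Rle 0 (L / 2).
{ have : Rle 0 L by apply/RleP. lra. }
have HNone j : F None <= F (Some j) by rewrite HF0.
rewrite -(RInt_sigma_seq F HF0 Hxi l L HL).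
rewrite -(RInt_Chasles G 0 (L / 2) L); try exact: ex_RInt_sigma_seq.
have [Hex Hshift] := RInt_translate G (- (L / 2)) 0 (L / 2) (ex_RInt_sigma_seq _ _ _ _).
rewrite !RminusE !RoppE sub0r opprK -splitr in Hshift.
have Hle : RInt G (L / 2) L <= RInt G 0 (L / 2).
{ rewrite -Hshift; apply/RleP/RInt_le => //.
  - exact: (ex_RInt_sigma_seq F l).
  - move=> t _; apply/RleP/sigma_seq_antitone => //.
    by rewrite RminusE opprK lerDl; apply/RleP. }
by rewrite /plus /= RplusE mulr_natl mulr2n lerD2l.
Qed.
End SampledNeighbour.

Lemma natr2_IZR : (2%:R : R) = IZR 2.
Proof. by rewrite -INRE /=; ring. Qed.

Lemma uniform_mean_bounds (g : R -> R) (l B : R) : 0 < l -> ex_RInt g 0 (l / 2) ->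
  (forall t, 0 <= g t <= B) -> 0 <= 2 / l * RInt g 0 (l / 2) <= B.
Proof.
move=> Hl Hex Hg.
have HlR : Rlt 0 l by apply/RltP.
have [Hlo Hhi] : Rle 0 (RInt g 0 (l / 2)) /\ Rle (RInt g 0 (l / 2)) (l / 2 * B).
{ apply: RInt_bounds => //; first lra.
  by move=> t; have /andP[/RleP H0 /RleP H1] := Hg t. }
have Hinv : Rle 0 (2 / l) by apply: Rdiv_le_0_compat; lra.
have Hmean : Rle 0 (2 / l * RInt g 0 (l / 2)) /\ Rle (2 / l * RInt g 0 (l / 2)) B.
{ split; first exact: Rmult_le_pos.
  apply: Rle_trans (Rmult_le_compat_l _ _ _ Hinv Hhi) _.
  by right; field; lra. }
by rewrite natr2_IZR; apply/andP; split; apply/RleP; [exact: Hmean.1 | exact: Hmean.2].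
Qed.

Section TopHalfSampling.
Variables (I J : finType) (E : I -> J -> bool) (w : I -> J -> R) (lam : I -> R)
  (x : I -> J -> R) (ord : (J -> R) -> I -> seq J).
Hypothesis lam_gt0 : forall i, 0 < lam i.

Definition match_state (s : J -> R) (i : I) (o : option J) : J -> R :=
  if o is Some j then fun k => if k == j then Rmax (s j) (w i j) else s k else s.

Lemma ths_stepE s i theta :
  ths_step w x ord s i theta = match_state s i (sigma_seq (x i) (ord s i) theta).
Proof. by []. Qed.

Lemma match_state_bounded (M : R) s i o : (forall j, w i j <= M) ->
  (forall j, 0 <= s j <= M) -> forall j, 0 <= match_state s i o j <= M.
Proof.
move=> HM Hs j; case: o => [k|] //=; case: eqP => // _.
have /andP[Hk0 HkM] := Hs k.
by rewrite RmaxE le_max Hk0 ge_max HkM HM.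
Qed.

Lemma total_rate_ge i : lam i <= total_rate lam.
Proof.
rewrite /total_rate (bigD1 i) //= lerDl.
by apply: sumr_ge0 => k _; apply: ltW.
Qed.

Lemma rate_average_le (c : I -> R) (B : R) : 0 <= B -> (forall i, c i <= B) ->
  \sum_i lam i / total_rate lam * c i <= B.
Proof.
move=> HB Hc.
apply: (@le_trans _ _ (\sum_i lam i / total_rate lam * B)).
  apply: ler_sum => i _; apply: ler_wpM2l => //.
  by rewrite divr_ge0 // ltW // (lt_le_trans _ (total_rate_ge i)).
rewrite -mulr_suml -mulr_suml -/(total_rate lam).
have [->|Hnz] := eqVneq (total_rate lam) 0; first by rewrite invr0 mulr0 mul0r.
by rewrite mulfV // mul1r.
Qed.

Lemma ths_value_bounded (M : R) : (forall i j, w i j <= M) ->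
  forall n s, (forall j, 0 <= s j <= M) -> 0 <= ths_value w x lam ord n s <= #|J|%:R * M.
Proof.
move=> HM; elim=> [|n IH] s Hs /=.
  rewrite sumr_ge0 => [|j _]; last by have /andP[] := Hs j.
  rewrite -sum1_card natr_sum mulr_suml ler_sum // => j _.
  by rewrite mul1r; have /andP[] := Hs j.
have HB : 0 <= #|J|%:R * M by have /andP[H0 H1] := IH s Hs; apply: le_trans H1.
have Hc i : 0 <= 2 / lam i * RInt (fun t => ths_value w x lam ord n (ths_step w x ord s i t))
                               0 (lam i / 2) <= #|J|%:R * M.
{ apply: uniform_mean_bounds => // [|t].
  - exact: (ex_RInt_sigma_seq _ (x i) (fun o => ths_value w x lam ord n (match_state s i o))).
  - by apply: IH; apply: match_state_bounded. }
rewrite sumr_ge0 => [|i _] /=; first by apply: rate_average_le => // i; have /andP[] := Hc i.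
have Hi := lam_gt0 i.
apply: mulr_ge0; last by have /andP[] := Hc i.
by rewrite divr_ge0 ?ltW // (lt_le_trans Hi (total_rate_ge i)).
Qed.

Lemma ths_value_first_step i theta :
  ths_value w x lam ord 0 (ths_step w x ord (fun _ => 0) i theta)
  = oapp (resid w (fun _ => 0) i) 0 (sigma_seq (x i) (ord (fun _ => 0) i) theta).
Proof.
rewrite ths_stepE /=; case: sigma_seq => [j|] /=; last by rewrite big1.
rewrite (bigD1 j) //= eqxx big1 => [|k /negbTE -> //].
by rewrite addr0 /resid Rminus_0_r Rmax_comm.
Qed.

Lemma sum_valid_order (F : J -> R) s i : valid_order E w ord ->
  \sum_(j <- ord s i) F j = \sum_(j | E i j) F j.
Proof. by move=> Hord; rewrite (perm_big _ (Hord s i).1) big_filter big_enum_cond. Qed.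

Lemma lp_row_le_top_half i : valid_order E w ord -> lp_feasible E lam x ->
  \sum_(j | E i j) w i j * x i j <=
  2 * RInt (fun t => ths_value w x lam ord 0 (ths_step w x ord (fun _ => 0) i t)) 0 (lam i / 2).
Proof.
move=> Hord [Hx0 _ Hrow _].
set r := resid w (fun _ => 0) i.
rewrite (RInt_ext _ (fun t => oapp r 0 (sigma_seq (x i) (ord (fun _ => 0) i) t)));
  last by move=> t _; apply: ths_value_first_step.
have Hr j : 0 <= r j by rewrite /r /resid RmaxE le_max lexx orbT.
have Hrow' : \sum_(j <- ord (fun _ => 0) i) x i j <= lam i by rewrite sum_valid_order.
apply: le_trans (RInt_sigma_seq_top_half _ (x i) (oapp r 0) _ _ erefl Hr (Hx0 i)
                   (Hord _ i).2 Hrow').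
rewrite sum_valid_order // ler_sum // => j _.
by apply: ler_wpM2r => //=; rewrite /r /resid RmaxE le_max RminusE subr0 lexx.
Qed.

Lemma total_rate_ths_value1 :
  total_rate lam * ths_value w x lam ord 1 (fun _ => 0) =
  \sum_i 2 * RInt (fun t => ths_value w x lam ord 0 (ths_step w x ord (fun _ => 0) i t))
                  0 (lam i / 2).
Proof.
rewrite /= mulr_sumr; apply: eq_bigr => i _.
have Hi : lam i != 0 by rewrite gt_eqF.
have HL : total_rate lam != 0 by rewrite gt_eqF // (lt_le_trans _ (total_rate_ge i)).
by rewrite mulrA [total_rate lam * _]mulrC divfK // mulrA mulrCA mulfV // mulr1.
Qed.

End TopHalfSampling.

Lemma weight_bound (I J : finType) (w : I -> J -> R) :
  exists2 M, 0 <= M & forall i j, w i j <= M.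
Proof.
exists (\sum_(p : I * J) `|w p.1 p.2|); first by rewrite sumr_ge0.
move=> i j; rewrite (bigD1 (i, j)) //= (le_trans (ler_norm _)) // lerDl.
by rewrite sumr_ge0.
Qed.

Lemma expected_objE (I J : finType) (w x : I -> J -> R) (lam : I -> R)
    (ord : (J -> R) -> I -> seq J) (t : R) :
  expected_obj w x lam ord t =
  Series (fun n => poisson_pmf (total_rate lam * t) n * ths_value w x lam ord n (fun _ => 0)).
Proof. by apply: Series_ext => n; rewrite /poisson_pmf RpowE INRE factE. Qed.

Theorem mainTheorem3 (I J : finType) (E : I -> J -> bool) (w : I -> J -> R)
    (lam : I -> R) (x : I -> J -> R) (ord : (J -> R) -> I -> seq J) :
  (forall i j, E i j -> 0 < w i j) ->
  (forall i, 0 < lam i) ->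
  lp_optimal E w lam x ->
  valid_order E w ord ->
  let Opt := lp_value E w x in
  let Abar := fun t : R => Opt - expected_obj w x lam ord t in
  exists D : R,
    filterlim (fun h : R => (Abar h - Abar 0) / h) (at_right 0) (locally D)
    /\ D <= - Opt.
Proof.
move=> _ Hlam [Hfeas _] Hord Opt Abar.
set V := fun n => ths_value w x lam ord n (fun _ => 0).
have [M HM0 HM] := weight_bound _ _ w.
have HV n : Rle 0 (V n) /\ Rle (V n) (#|J|%:R * M).
{ have Hs0 : forall j : J, (0 : R) <= 0 <= M by move=> j; rewrite lexx.
  by have /andP[/RleP H0 /RleP H1] := ths_value_bounded _ _ w lam x ord Hlam M HM n _ Hs0. }
have HV0 : V 0%N = 0 by rewrite /V /= big1.
have HL : Rle 0 (total_rate lam) by apply/RleP; rewrite sumr_ge0 // => i _; apply: ltW.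
exists (- (total_rate lam * V 1%N)); split.
- have Hder := poisson_mixture_right_derivative _ _ _ HL HV0 HV.
  set F := fun t => Series _ in Hder.
  have HAbar t : Abar t = Opt - F t by rewrite /Abar expected_objE.
  have := filterlim_comp _ _ _ _ _ _ _ _ Hder (filterlim_opp _).
  apply: filterlim_ext => h.
  rewrite /Hierarchy.opp /= !HAbar R0E -!RminusE -RdivE /Rdiv; ring.
- rewrite lerN2 total_rate_ths_value1 //; apply: ler_sum => i _.
  exact: lp_row_le_top_half Hord Hfeas.
Qed.
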